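(* Let $M\ge1$, $T\ge M+1$, $n\ge1$ be integers and $p=\frac1{M+1}$. Let $\mathbf{c}_1,\dots,\mathbf{c}_T\in\{0,1\}^n$ be random words whose $Tn$ bits are independent, each equal to $1$ with probability $p$. Let $E_{\mathrm{id}}$ be the event that there exist $t\in\{1,\dots,T\}$, a set $S\subseteq\{1,\dots,T\}\setminus\{t\}$ with $|S|=M$, and shifts $s_u\in\{0,\dots,n-1\}$ ($u\in S$) such that $\bigvee_{u\in S}\sigma_{s_u}(\mathbf{c}_u)$ covers $\mathbf{c}_t$. Then \[\Pr(E_{\mathrm{id}})\le \exp\!\Big((M+1)\ln T+M\ln n-\tfrac{n}{M+1}\mathrm{e}^{-1}\Big).\]
   Context: $\vee$ is componentwise Boolean OR. A vector $\mathbf{y}$ covers $\mathbf{z}$ if $y_i\ge z_i$ for all $i$. For $\mathbf{c}\in\{0,1\}^n$ and $s\in\{0,\dots,n-1\}$, $\sigma_s(\mathbf{c})$ is defined by $(\sigma_s(\mathbf{c}))_i=c_{i-s}$ if $i>s$ and $0$ otherwise. *)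

From HB Require Import structures.
From mathcomp Require Import all_boot all_order all_algebra.
From mathcomp Require Import all_classical all_reals all_analysis.
Unset Printing Implicit Defensive.
Import Order.TTheory GRing.Theory Num.Theory.

(* Positions are 0-indexed: 'I_n = {0,...,n-1} stands for {1,...,n}. *)
Definition word (n : nat) := {ffun 'I_n -> bool}.

(* sigma_s(c): (sigma_s c)_i = c_{i-s} if i > s (1-indexed), 0 otherwise.
   In 0-indexed form: position i holds c_j for the j with j + s = i, if any. *)
Definition shiftw (n : nat) (s : nat) (c : word n) (i : 'I_n) : bool :=
  [exists j : 'I_n, (j + s == i) && c j].

Definition covers (n : nat) (y z : 'I_n -> bool) : bool :=
  [forall i, z i ==> y i].

Definition E_id (M T n : nat) (c : {ffun 'I_T -> word n}) : bool :=
  [exists t : 'I_T, exists S : {set 'I_T},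
     [&& t \notin S, #|S| == M &
       [exists sh : {ffun 'I_T -> 'I_n},
          covers n (fun i => \big[orb/false]_(u in S) shiftw n (sh u) (c u) i) (c t)]]].

Definition cfg_weight {R : realType} (p : R) (T n : nat) (c : {ffun 'I_T -> word n}) : R :=
  \prod_(t : 'I_T) \prod_(i : 'I_n) (if c t i then p else 1 - p).

Definition Prob {R : realType} (p : R) (T n : nat)
  (E : {ffun 'I_T -> word n} -> bool) : R :=
  \sum_(c | E c) cfg_weight p T n c.

From HB Require Import structures.
From mathcomp Require Import all_boot all_order all_algebra all_fingroup.
From mathcomp Require Import all_classical all_reals all_analysis.
From mathcomp Require Import ring lra.
Import Order.TTheory GRing.Theory Num.Theory.
Local Open Scope ring_scope.

(* Union bound over the witnesses (t, S, s) of E_id, of which there are at most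
   T^(M+1) n^M.  For a fixed witness, rotating each c_u (u in S) cyclically by
   s_u preserves the product measure and maps the event into "the unshifted OR
   of the c_u covers c_t", whose probability factorises over the n independent
   columns as (1 - p (1 - p)^M)^n.  With p = 1/(M+1) one has (1 - p)^M >= e^-1,
   and 1 - x <= e^-x concludes. *)

Lemma prod_nat_forall (R : comPzSemiRingType) (I : finType) (b : pred I) :
  \prod_i ((b i)%:R : R) = [forall i, b i]%:R.
Proof.
have [/forallP bT | /forallPn [i bi]] := boolP [forall i, b i].
  by rewrite big1 // => i _; rewrite bT.
by rewrite (bigD1 i) //= (negbTE bi) mul0r.
Qed.

Definition bern {R : pzRingType} (p : R) (b : bool) : R := if b then p else 1 - p.

Lemma sum_bern {R : pzRingType} (p : R) : \sum_b bern p b = 1.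
Proof. by rewrite big_bool /bern /= addrC subrK. Qed.

Section IndependentBits.

Context {R : realType} {p : R} {T n : nat}.
Hypothesis p01 : 0 <= p <= 1.

Local Notation cfg := {ffun 'I_T -> word n}.
Local Notation column := {ffun 'I_T -> bool}.
Local Notation weight := (cfg_weight p T n).
Local Notation Pr := (Prob p T n).

Lemma cfg_weightE c : weight c = \prod_u \prod_i bern p (c u i).
Proof. by []. Qed.

Lemma cfg_weight_ge0 c : 0 <= weight c.
Proof.
case/andP: p01 => p0 p1; apply: prodr_ge0 => u _; apply: prodr_ge0 => i _.
by rewrite /bern; case: (c u i); rewrite ?subr_ge0.
Qed.

Lemma ProbE E : Pr E = \sum_c (E c)%:R * weight c.
Proof.
rewrite /Prob big_mkcond; apply: eq_bigr => c _.
by case: (E c); rewrite ?mul1r ?mul0r.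
Qed.

Lemma Prob_union_bound {I : finType} {P : pred I} {F : I -> pred cfg} {E : pred cfg} :
  (forall c, E c -> exists2 i, P i & F i c) -> Pr E <= \sum_(i | P i) Pr (F i).
Proof.
move=> EF; under eq_bigr do rewrite ProbE.
rewrite ProbE exchange_big /=; apply: ler_sum => c _.
have Fc_ge0 i : 0 <= (F i c)%:R * weight c by rewrite mulr_ge0 ?cfg_weight_ge0.
have [/EF [i Pi Fic] | _] := boolP (E c); last first.
  by rewrite mul0r sumr_ge0.
by rewrite (bigD1 i) //= Fic lerDl sumr_ge0.
Qed.

Lemma Prob_le_inj (g : cfg -> cfg) (E E' : pred cfg) :
  injective g -> (forall c, weight (g c) = weight c) ->
  (forall c, E (g c) -> E' c) -> Pr E <= Pr E'.
Proof.
move=> g_inj wg EE'; rewrite !ProbE (reindex_inj g_inj) /=.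
apply: ler_sum => c _; rewrite wg ler_wpM2r ?cfg_weight_ge0 //.
by have := EE' c; case: (E (g c)) => // ->.
Qed.

Definition permute_cfg (f : 'I_T -> {perm 'I_n}) (c : cfg) : cfg :=
  [ffun u => [ffun j => c u (f u j)]].

Lemma permute_cfg_inj f : injective (permute_cfg f).
Proof.
move=> c1 c2 /ffunP e; apply/ffunP => u; apply/ffunP => i.
by move/ffunP: (e u) => /(_ ((f u)^-1 i)%g); rewrite !ffunE permKV.
Qed.

Lemma cfg_weight_permute f c : weight (permute_cfg f c) = weight c.
Proof.
rewrite !cfg_weightE; apply: eq_bigr => u _.
rewrite [RHS](reindex_inj (@perm_inj _ (f u))); apply: eq_bigr => i _.
by rewrite !ffunE.
Qed.

Definition column_weight (col : column) : R := \prod_u bern p (col u).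

Lemma sum_column_weight : \sum_col column_weight col = 1.
Proof.
by rewrite -(bigA_distr_bigA (fun u => bern p)) big1 // => u _; rewrite sum_bern.
Qed.

Lemma Prob_columnwise (P : pred column) :
  Pr (fun c => [forall i, P [ffun u => c u i]])
  = (\sum_col (P col)%:R * column_weight col) ^+ n.
Proof.
rewrite ProbE.
pose tr (d : {ffun 'I_n -> column}) : cfg := [ffun u => [ffun i => d i u]].
have tr_bij : bijective tr.
  exists (fun c : cfg => [ffun i => [ffun u => c u i]] : {ffun 'I_n -> column});
    by move=> x; apply/ffunP => ?; apply/ffunP => ?; rewrite !ffunE.
rewrite (reindex tr) /=; last exact: onW_bij.
rewrite -[in RHS](card_ord n) -prodr_const bigA_distr_bigA /=.
apply: eq_bigr => d _.
have trK i : [ffun u => tr d u i] = d i by apply/ffunP => u; rewrite !ffunE.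
rewrite cfg_weightE exchange_big /= -prod_nat_forall -big_split /=.
apply: eq_bigr => i _; rewrite trK; congr (_ * _).
by apply: eq_bigr => u _; rewrite !ffunE.
Qed.

Lemma sum_column_cover (t : 'I_T) (S : {set 'I_T}) : t \notin S ->
  \sum_(col : column) (col t ==> [exists u in S, col u])%:R * column_weight col
  = 1 - p * (1 - p) ^+ #|S|.
Proof.
move=> tS.
pose uncovered u b := ((u == t) ==> b) && ((u \in S) ==> ~~ b).
have coverE (col : column) : (col t ==> [exists u in S, col u])%:R
    = 1 - \prod_u ((uncovered u (col u))%:R : R).
  rewrite prod_nat_forall.
  have -> : [forall u, uncovered u (col u)] = ~~ (col t ==> [exists u in S, col u]).
    rewrite negb_imply; apply/forallP/andP => [unc | [ct /exists_inPn ncov] u].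
      split; first by have := unc t; rewrite /uncovered eqxx (negbTE tS) andbT.
      apply/exists_inPn => u uS; have := unc u; rewrite /uncovered uS.
      by case/andP.
    rewrite /uncovered; case: eqP => [->|_]; first by rewrite ct (negbTE tS).
    by case uS: (u \in S) => //=; apply: ncov.
  by case: (_ ==> _); rewrite ?subr0 ?subrr.
under eq_bigr do rewrite coverE mulrBl mul1r.
rewrite sumrB sum_column_weight; congr (_ - _).
rewrite /column_weight.
under eq_bigr do rewrite -big_split /=.
rewrite -(bigA_distr_bigA (fun u b => (uncovered u b)%:R * bern p b)) /=.
rewrite (eq_bigr (fun u => (if u == t then p else 1) * (if u \in S then 1 - p else 1))).
  by rewrite big_split /= -big_mkcond -[X in _ * X]big_mkcond big_pred1_eq prodr_const.
move=> u _; rewrite big_bool /uncovered /bern.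
by case: eqP => [->|_]; rewrite ?(negbTE tS); case: (u \in S) => /=; ring.
Qed.

Definition covered_by (t : 'I_T) (S : {set 'I_T}) (c : cfg) : bool :=
  [forall i, c t i ==> [exists u in S, c u i]].

Lemma Prob_covered_by (t : 'I_T) (S : {set 'I_T}) : t \notin S ->
  Pr (covered_by t S) = (1 - p * (1 - p) ^+ #|S|) ^+ n.
Proof.
move=> tS; rewrite -(sum_column_cover _ _ tS) -Prob_columnwise.
apply: eq_bigl => c; apply: eq_forallb => i; rewrite !ffunE.
by congr (_ ==> _); apply: eq_existsb => u; rewrite ffunE.
Qed.

Definition rot_ord (r : nat) (j : 'I_n) : 'I_n :=
  Ordinal (ltn_pmod (j + r) (leq_ltn_trans (leq0n j) (ltn_ord j))).

Lemma rot_ord_inj r : injective (rot_ord r).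
Proof.
move=> j k /(congr1 val) /eqP /=.
by rewrite eqn_modDr !modn_small // => /eqP /val_inj.
Qed.

Definition rotation (r : nat) : {perm 'I_n} := perm (rot_ord_inj r).

Definition shift_covered (t : 'I_T) (S : {set 'I_T}) (sh : {ffun 'I_T -> 'I_n})
  (c : cfg) : bool :=
  covers n (fun i => \big[orb/false]_(u in S) shiftw n (sh u) (c u) i) (c t).

(* Rotating c_u cyclically by s_u undoes the shift exactly where it does not wrap
   around, which is all that sigma_s keeps. *)
Lemma shift_covered_rotate (t : 'I_T) (S : {set 'I_T}) sh : t \notin S ->
  forall c, shift_covered t S sh
    (permute_cfg (fun u => rotation (if u \in S then val (sh u) else 0%N)) c) ->
  covered_by t S c.
Proof.
move=> tS c /forallP cov; apply/forallP => i; apply/implyP => cti.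
have := cov i; rewrite big_orE !ffunE (negbTE tS) permE.
have -> : rot_ord 0 i = i by apply: val_inj; rewrite /= addn0 modn_small.
move=> /implyP /(_ cti) /exists_inP [u uS /existsP [j /andP [/eqP jsh]]].
rewrite !ffunE uS permE => cuj; apply/exists_inP; exists u => //.
suff <- : rot_ord (sh u) j = i by [].
by apply: val_inj; rewrite /= jsh modn_small.
Qed.

Lemma Prob_shift_covered_le (t : 'I_T) (S : {set 'I_T}) sh : t \notin S ->
  Pr (shift_covered t S sh) <= (1 - p * (1 - p) ^+ #|S|) ^+ n.
Proof.
move=> tS; rewrite -(Prob_covered_by _ _ tS).
pose f u := rotation (if u \in S then val (sh u) else 0%N).
apply: (Prob_le_inj (permute_cfg f)); first exact: permute_cfg_inj.
  exact: cfg_weight_permute.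
exact: shift_covered_rotate.
Qed.

End IndependentBits.

Lemma bin_leq_expn m k : ('C(m, k) <= m ^ k)%N.
Proof.
apply: (@leq_trans (m ^_ k)); first by rewrite -bin_ffact leq_pmulr ?fact_gt0.
rewrite ffact_prod -(card_ord k) -prod_nat_const card_ord.
by apply: leq_prod => i _; rewrite leq_subr.
Qed.

Section Witnesses.

Variables (M T n : nat) (z : 'I_n).

Local Notation index := ('I_T * {set 'I_T} * {ffun 'I_T -> 'I_n})%type.

(* Shifts outside S are normalised to z, so that each witness is counted once. *)
Definition witness (x : index) : bool :=
  [&& x.1.1 \notin x.1.2, #|x.1.2| == M & x.2 \in pffun_on z x.1.2 predT].

Lemma E_id_witness c :
  E_id M T n c -> exists2 x, witness x & shift_covered x.1.1 x.1.2 x.2 c.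
Proof.
case/existsP => t /existsP [S /and3P [tS /eqP cardS /existsP [sh cov]]].
pose sh' : {ffun 'I_T -> 'I_n} := [ffun u => if u \in S then sh u else z].
exists (t, S, sh').
  apply/and3P; split => //=; first exact/eqP.
  apply/pffun_onP; split => //; apply/fintype.subsetP => u.
  by rewrite inE ffunE; case: (u \in S); rewrite ?eqxx.
apply/forallP => i /=.
have -> : \big[orb/false]_(u in S) shiftw n (sh' u) (c u) i
        = \big[orb/false]_(u in S) shiftw n (sh u) (c u) i.
  by apply: eq_bigr => u uS; rewrite ffunE uS.
exact: (forallP cov i).
Qed.

Lemma card_witness : (#|witness| <= T ^ M.+1 * n ^ M)%N.
Proof.
pose P (y : 'I_T * {set 'I_T}) := (y.1 \notin y.2) && (#|y.2| == M).
have -> : #|witness| = (\sum_(y | P y) \sum_(sh in pffun_on z y.2 predT) 1)%N.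
  by rewrite pair_big_dep -sum1_card; apply: eq_bigl => x; rewrite unfold_in andbA.
rewrite (eq_bigr (fun=> n ^ M)%N); last first.
  by move=> y /andP [_ /eqP yM]; rewrite sum1_card card_pffun_on card_ord yM.
rewrite sum_nat_const leq_mul2r expnS; apply/orP; right.
apply: (@leq_trans #|finset.setX [set: 'I_T] [set S : {set 'I_T} | #|S| == M]|).
  by apply/subset_leq_card/fintype.subsetP => y /andP [_ yM]; rewrite !inE.
by rewrite cardsX cardsT card_draws !card_ord leq_mul2l bin_leq_expn orbT.
Qed.

End Witnesses.

Lemma expRN1_le_pow (R : realType) (M : nat) :
  expR (-1) <= (1 - (M.+1%:R : R)^-1) ^+ M.
Proof.
case: M => [|M]; first by rewrite expr0 expR_le1 lerN10.
set m : R := M.+1%:R.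
have m0 : 0 < m by rewrite ltr0n.
have -> : (M.+2%:R : R) = m + 1 by rewrite -addn1 natrD.
have -> : (-1 : R) = m * - m^-1 by rewrite mulrN mulfV ?gt_eqF.
rewrite expRM_natl; apply: lerXn2r; rewrite ?nnegrE ?expR_ge0 //.
  by rewrite subr_ge0 invf_le1 ?lerDr; lra.
have -> : 1 - (m + 1)^-1 = (1 + m^-1)^-1.
  by field; have M0 : (0 : R) <= M%:R by []; rewrite !lt0r_neq0 //; lra.
rewrite expRN lef_pV2 ?posrE ?expR_gt0 ?expR_ge1Dx //.
by rewrite addr_gt0 ?invr_gt0.
Qed.

Lemma one_sub_pow_le_expR (R : realType) (M : nat) (p : R) : p = (M.+1%:R)^-1 ->
  1 - p * (1 - p) ^+ M <= expR (- (p * expR (-1))).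
Proof.
move=> ->; apply: le_trans (expR_ge1Dx _); rewrite lerD2l lerN2.
by rewrite ler_wpM2l ?invr_ge0 ?expRN1_le_pow.
Qed.

Theorem mainTheorem2 (R : realType) (M T n : nat)
  (hM : (1 <= M)%N) (hT : (M.+1 <= T)%N) (hn : (1 <= n)%N) :
  Prob ((M.+1%:R : R)^-1) T n (E_id M T n) <=
  expR (M.+1%:R * ln (T%:R : R) + M%:R * ln (n%:R : R)
        - n%:R / M.+1%:R * expR (-1)).
Proof.
set p := (M.+1%:R : R)^-1.
have p0 : 0 <= p by rewrite invr_ge0.
have p1 : p <= 1 by rewrite invf_le1 ?ler1n.
have p01 : 0 <= p <= 1 by rewrite p0 p1.
set q := 1 - p * (1 - p) ^+ M.
have q0 : 0 <= q by rewrite subr_ge0 mulr_ile1 ?exprn_ge0 ?exprn_ile1 ?subr_ge0 ?gerBl.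
pose z : 'I_n := Ordinal hn.
apply: le_trans (Prob_union_bound p01 (@E_id_witness M T n z)) _.
apply: (@le_trans _ _ (\sum_(x | witness M T n z x) q ^+ n)).
  apply: ler_sum => x /and3P [tS /eqP cardS _].
  by rewrite /q -cardS; apply: Prob_shift_covered_le.
have T0 : (0 : R) < T%:R by rewrite ltr0n (leq_trans _ hT).
have n0 : (0 : R) < n%:R by rewrite ltr0n.
have -> : expR (M.+1%:R * ln (T%:R : R) + M%:R * ln (n%:R : R)
                - n%:R / M.+1%:R * expR (-1))
        = expR (- (p * expR (-1))) ^+ n * (T ^ M.+1 * n ^ M)%:R.
  rewrite !expRD !expRM_natl !lnK ?posrE // -expRM_natl natrM !natrX.
  by rewrite mulrC /p; congr (expR _ * _); ring.
rewrite (eq_bigl (mem (witness M T n z))) // sumr_const -[_ *+ #|_|]mulr_natr.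
apply: ler_pM; rewrite ?exprn_ge0 //.
  by apply: lerXn2r; rewrite ?nnegrE ?expR_ge0 ?one_sub_pow_le_expR.
by rewrite ler_nat card_witness.
Qed.
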